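(* Let $\Omega\subset\mathbb{R}^N$ be a nonempty open set, $X=\overline{\Omega}$, $Y\subset\mathbb{R}^N$, $x_0\in\Omega$ and $u:X\to Y$. If $u$ is differentiable at $x_0$ and $r_u(x_0)=2$, then $\nabla u(x_0)\in O(N)$.
   Context: $O(N)$ is the set of orthogonal $N\times N$ matrices. $e_u(x_0)=\limsup_{x\to x_0,\,x\ne x_0}\frac{|u(x)-u(x_0)|}{|x-x_0|}$, $c_u(x_0)=\limsup_{x\to x_0,\,x\ne x_0}\frac{|x-x_0|}{|u(x)-u(x_0)|}$ (quotient $+\infty$ if $u(x)=u(x_0)$), and $r_u(x_0)=e_u(x_0)+c_u(x_0)$. *)

(* R^N is modelled as row vectors 'rV[R]_N. *)
From HB Require Import structures.
From mathcomp Require Import all_boot all_order all_algebra.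
From mathcomp Require Import all_classical all_reals all_analysis.
Set Implicit Arguments. Unset Strict Implicit. Unset Printing Implicit Defensive.
Import Order.TTheory GRing.Theory Num.Theory.
Import numFieldNormedType.Exports.
Local Open Scope classical_set_scope.
Local Open Scope ring_scope.

(* Euclidean norm |x| on R^N (the library norm on 'rV is the max norm). *)
Definition enorm {R : realType} {N : nat} (v : 'rV[R]_N) : R :=
  Num.sqrt (\sum_(i < N) v ord0 i ^+ 2).

(* limsup_{x -> x0, x <> x0} q x, in the extended reals:
   inf over r > 0 of sup of q on the punctured Euclidean ball of radius r. *)
Definition plimsup {R : realType} {N : nat} (q : 'rV[R]_N -> \bar R)
  (x0 : 'rV[R]_N) : \bar R :=
  ereal_inf [set ereal_sup (q @` [set x | 0 < enorm (x - x0) < r])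
            | r in [set r : R | 0 < r]].

Definition e_u {R : realType} {N : nat} (u : 'rV[R]_N -> 'rV[R]_N)
  (x0 : 'rV[R]_N) : \bar R :=
  plimsup (fun x => (enorm (u x - u x0) / enorm (x - x0))%:E) x0.

Definition c_u {R : realType} {N : nat} (u : 'rV[R]_N -> 'rV[R]_N)
  (x0 : 'rV[R]_N) : \bar R :=
  plimsup (fun x => if u x == u x0 then +oo%E
                    else (enorm (x - x0) / enorm (u x - u x0))%:E) x0.

Definition r_u {R : realType} {N : nat} (u : 'rV[R]_N -> 'rV[R]_N)
  (x0 : 'rV[R]_N) : \bar R := (e_u u x0 + c_u u x0)%E.

(* The Jacobian matrix of u at x0 is the library's 'J u x0 = lin1_mx ('d u x0)
   (row-vector convention: u (x0+h) = u x0 + h *m 'J u x0 + o(h)). *)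

Definition orthogonal_mx {R : realType} {N : nat} (A : 'M[R]_N) : Prop :=
  A *m A^T = 1%:M.

From mathcomp Require Import all_boot all_order all_algebra.
From mathcomp Require Import all_classical all_reals all_analysis.
From mathcomp Require Import lra.
Set Implicit Arguments.
Unset Strict Implicit.
Unset Printing Implicit Defensive.
Import Order.TTheory GRing.Theory Num.Theory.
Import numFieldNormedType.Exports.
Local Open Scope classical_set_scope.
Local Open Scope ring_scope.

(* Let J be the Jacobian of u at x0 and h a unit vector. Along the ray
   x0 + t h (t -> 0+) the quotients |u x - u x0| / |x - x0| tend to |h J|,
   so e_u(x0) >= |h J| and c_u(x0) >= 1 / |h J| (c_u(x0) = +oo if h J = 0).
   Hence 2 = r_u(x0) >= a + 1/a with a = |h J|, which forces a = 1. So J is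
   an isometry for the Euclidean norm, and by polarization J J^T = 1. *)

Section euclidean_norm.
Variables (R : realType) (N : nat).
Implicit Types (v w : 'rV[R]_N) (A : 'M[R]_N).

Lemma enorm_ge0 v : 0 <= enorm v.
Proof. exact: sqrtr_ge0. Qed.

Lemma enorm_sqr v : enorm v ^+ 2 = (v *m v^T) 0 0.
Proof.
rewrite sqr_sqrtr; last by apply: sumr_ge0 => i _; rewrite sqr_ge0.
by rewrite mxE; apply: eq_bigr => i _; rewrite mxE expr2.
Qed.

Lemma enorm_gt0 v : v != 0 -> 0 < enorm v.
Proof.
move=> v_neq0; rewrite lt_neqAle enorm_ge0 andbT eq_sym.
rewrite sqrtr_eq0 -ltNge; apply: contraNT v_neq0; rewrite -leNgt => sum_le0.
apply/eqP/rowP => i; rewrite mxE; apply/eqP; rewrite -sqrf_eq0.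
have /psumr_eq0P sqr_eq0 : \sum_(j < N) v 0 j ^+ 2 = 0.
  by apply/eqP; rewrite eq_le sum_le0 sumr_ge0 // => j _; rewrite sqr_ge0.
by rewrite sqr_eq0 // => j _; rewrite sqr_ge0.
Qed.

Lemma enormZ (c : R) v : enorm (c *: v) = `|c| * enorm v.
Proof.
rewrite /enorm; under eq_bigr do rewrite mxE exprMn.
by rewrite -mulr_sumr sqrtrM ?sqrtr_sqr // sqr_ge0.
Qed.

Lemma cvg_enorm (T : Type) (F : set_system T) {FF : Filter F}
    (f : T -> 'rV[R]_N) (v : 'rV[R]_N) :
  f @ F --> v -> (fun x => enorm (f x)) @ F --> enorm v.
Proof.
move=> fv; have sqr_cvg : (fun x => \sum_(i < N) f x 0 i ^+ 2) @ F -->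
    \sum_(i < N) v 0 i ^+ 2.
  apply: (cvg_big (P := xpredT) add_continuous) => i _.
  under eq_cvg do rewrite expr2; rewrite expr2.
  by apply: cvgM; exact: (continuous_cvg FF (@coord_continuous R 1 N 0 i v)).
exact: (continuous_cvg FF (@sqrt_continuous R _) sqr_cvg).
Qed.

Lemma dotmx_polar v w :
  2 * (v *m w^T) 0 0 = enorm (v + w) ^+ 2 - enorm v ^+ 2 - enorm w ^+ 2.
Proof.
have wv : w *m v^T = (v *m w^T)^T by rewrite trmx_mul trmxK.
rewrite !enorm_sqr linearD /= mulmxDl !mulmxDr wv !mxE.
lra.
Qed.

Lemma isometry_dotmx A :
  (forall h, enorm (h *m A) = enorm h) ->
  forall v w, ((v *m A) *m (w *m A)^T) 0 0 = (v *m w^T) 0 0.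
Proof.
move=> A_iso v w; have two_neq0 : (2 : R) != 0 by rewrite pnatr_eq0.
apply: (mulfI two_neq0).
by rewrite !dotmx_polar -mulmxDl !A_iso.
Qed.

Lemma orthogonal_of_isometry A :
  (forall h, enorm (h *m A) = enorm h) -> A *m A^T = 1%:M.
Proof.
move=> A_iso; have entryE (B : 'M[R]_N) i j :
    ((delta_mx 0 i : 'rV[R]_N) *m B *m (delta_mx 0 j : 'rV[R]_N)^T) 0 0 = B i j.
  by rewrite trmx_delta -rowE -colE !mxE.
apply/matrixP => i j; rewrite -entryE -[RHS]entryE mulmx1.
by rewrite mulmxA -mulmxA -trmx_mul isometry_dotmx.
Qed.

Lemma isometry_of_unit_sphere A :
  (forall h, enorm h = 1 -> enorm (h *m A) = 1) ->
  forall h, enorm (h *m A) = enorm h.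
Proof.
move=> A_unit h; have [->|h_neq0] := eqVneq h 0; first by rewrite mul0mx.
have h_gt0 := enorm_gt0 h_neq0.
have := A_unit ((enorm h)^-1 *: h).
rewrite -scalemxAl !enormZ gtr0_norm ?invr_gt0 // mulVf ?gt_eqF // => /(_ erefl).
by move/(congr1 ( *%R (enorm h))); rewrite mulrA divff ?gt_eqF // mul1r mulr1.
Qed.

Lemma enorm_ray (x0 h : 'rV[R]_N) (t : R) :
  enorm h = 1 -> 0 <= t -> enorm (t *: h + x0 - x0) = t.
Proof. by move=> h1 t_ge0; rewrite addrK enormZ h1 mulr1 ger0_norm. Qed.

End euclidean_norm.

Lemma le_plimsup_ray (R : realType) (N : nat) (q : 'rV[R]_N -> \bar R)
    (x0 h : 'rV[R]_N) (l : R) :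
  enorm h = 1 ->
  (forall eps, 0 < eps ->
     \forall t \near 0^'+, ((l - eps)%:E <= q (t *: h + x0)%R)%E) ->
  (l%:E <= plimsup q x0)%E.
Proof.
move=> h1 q_near; apply: le_ereal_inf_tmp => _ [r r_gt0 <-].
apply/lee_addgt0Pr => eps eps_gt0.
have near_r : \forall t \near 0^'+,
    [/\ 0 < t, t < r & ((l - eps)%:E <= q (t *: h + x0)%R)%E].
  near=> t; split.
  - by near: t; exact: nbhs_right_gt.
  - by near: t; exact: nbhs_right_lt.
  - by near: t; exact: q_near.
have [t [t_gt0 t_lt_r qt]] := filter_ex near_r.
rewrite -[l](subrK eps) EFinD leeD2r //; apply: le_trans qt _.
apply: ereal_sup_ubound; exists (t *: h + x0) => //=.
by rewrite (enorm_ray x0 h1 (ltW t_gt0)) t_gt0.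
Unshelve. all: by end_near.
Qed.

(* The M with M * a < 1 exhaust (0, a^-1) (all of (0, +oo) when a = 0), so the
   hypothesis says a + a^-1 <= 2. *)
Lemma eq1_of_addr_inv_le2 (R : realFieldType) (a : R) : 0 <= a ->
  (forall M, 0 < M -> M * a < 1 -> a + M <= 2) -> a = 1.
Proof.
move=> a_ge0 a_bounded.
have a_gt0 : 0 < a.
  rewrite lt_neqAle a_ge0 andbT eq_sym; apply/negP => /eqP a0.
  by have := a_bounded 3; rewrite a0 mulr0 add0r; lra.
have aV_gt0 : 0 < a^-1 by rewrite invr_gt0.
have Va : a^-1 * a = 1 by rewrite mulVf ?gt_eqF.
have aaV_le2 : a + a^-1 <= 2.
  apply/ler_addgt0Pr => e e_gt0; have [e_lt|e_ge] := ltP e a^-1.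
    have ea_gt0 : 0 < e * a by rewrite mulr_gt0.
    by have := a_bounded (a^-1 - e); rewrite mulrBl Va; lra.
  by have := a_bounded (a^-1 / 2); rewrite mulrAC Va; lra.
have : (a - 1) ^+ 2 <= 0.
  have : a * (a + a^-1) <= a * 2 by rewrite ler_pM2l.
  by rewrite mulrDr -[a * a^-1]mulrC Va; nra.
by rewrite le_eqVlt sqrf_eq0 subr_eq0 ltNge sqr_ge0 orbF => /eqP.
Qed.

Section ray_quotients.
Variables (R : realType) (N : nat) (u : 'rV[R]_N -> 'rV[R]_N) (x0 h : 'rV[R]_N).
Hypotheses (u_diff : differentiable u x0) (h1 : enorm h = 1).

Lemma cvg_ray_quotient :
  (fun t => enorm (u (t *: h + x0) - u x0) / t) @ 0^'+ -->
    enorm (h *m 'J u x0).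
Proof.
rewrite -deriveEjacobian //.
have quot_cvg : (fun t : R => t^-1 *: (u (t *: h + x0) - u x0)) @ 0^' -->
    'D_h u x0 := @diff_derivable _ _ _ u x0 h u_diff.
have quot_cvg_right :
    (fun t : R => t^-1 *: (u (t *: h + x0) - u x0)) @ 0^'+ --> 'D_h u x0.
  apply: cvg_trans quot_cvg; apply: cvg_app; apply: within_subset => t /= t_gt0.
  by rewrite gt_eqF.
have norm_quot_cvg :
    (fun t : R => enorm (t^-1 *: (u (t *: h + x0) - u x0))) @ 0^'+ -->
    enorm ('D_h u x0).
  exact: cvg_enorm quot_cvg_right.
apply: (cvg_trans _ norm_quot_cvg); apply: near_eq_cvg; near=> t.
have t_gt0 : 0 < t by near: t; exact: nbhs_right_gt.
by rewrite enormZ gtr0_norm ?invr_gt0 // mulrC.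
Unshelve. all: by end_near.
Qed.

Lemma le_e_u : ((enorm (h *m 'J u x0))%:E <= e_u u x0)%E.
Proof.
apply: (le_plimsup_ray h1) => eps eps_gt0.
move/cvgrPdist_lt: cvg_ray_quotient => /(_ eps eps_gt0) close.
near=> t; have t_gt0 : 0 < t by near: t; exact: nbhs_right_gt.
have : `|enorm (h *m 'J u x0) - enorm (u (t *: h + x0) - u x0) / t| < eps.
  by near: t; exact: close.
rewrite /= (enorm_ray x0 h1 (ltW t_gt0)) lee_fin ltr_distlC => /andP[/ltW ? _] //.
Unshelve. all: by end_near.
Qed.

Lemma le_c_u M : 0 < M -> M * enorm (h *m 'J u x0) < 1 -> (M%:E <= c_u u x0)%E.
Proof.
move=> M_gt0 Ma_lt1.
have gap : 0 < M^-1 - enorm (h *m 'J u x0).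
  by rewrite subr_gt0 -(ltr_pM2l M_gt0) mulfV ?gt_eqF.
apply: (le_plimsup_ray h1) => eps eps_gt0.
move/cvgrPdist_lt: cvg_ray_quotient => /(_ _ gap) close.
near=> t; have t_gt0 : 0 < t by near: t; exact: nbhs_right_gt.
have : `|enorm (h *m 'J u x0) - enorm (u (t *: h + x0) - u x0) / t| <
    M^-1 - enorm (h *m 'J u x0) by near: t; exact: close.
rewrite /=; case: eqP => [_ _|/eqP ux_neq]; first exact: leey.
rewrite ltr_distlC subrKC => /andP[_ q_lt].
have q_gt0 : 0 < enorm (u (t *: h + x0) - u x0) / t.
  by rewrite divr_gt0 // enorm_gt0 // subr_eq0.
have : M <= (enorm (u (t *: h + x0) - u x0) / t)^-1.
  by rewrite -[M]invrK lef_pV2 ?posrE ?invr_gt0 // ltW.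
rewrite (enorm_ray x0 h1 (ltW t_gt0)) lee_fin invf_div => M_le.
by apply: le_trans M_le; rewrite gerBl ltW.
Unshelve. all: by end_near.
Qed.

Lemma enorm_jacobian_eq1 : r_u u x0 = 2%:E -> enorm (h *m 'J u x0) = 1.
Proof.
move=> r2; apply: eq1_of_addr_inv_le2 => [|M M_gt0 Ma_lt1]; first exact: enorm_ge0.
by rewrite -lee_fin EFinD -r2; apply: leeD; [exact: le_e_u | exact: le_c_u].
Qed.

End ray_quotients.

Theorem lemma3p7 (R : realType) (N : nat) (Omega : set 'rV[R]_N)
  (Y : set 'rV[R]_N) (x0 : 'rV[R]_N) (u : 'rV[R]_N -> 'rV[R]_N) :
  open Omega -> Omega !=set0 ->
  (forall x, closure Omega x -> Y (u x)) ->
  Omega x0 ->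
  differentiable u x0 ->
  r_u u x0 = 2%:E ->
  orthogonal_mx ('J u x0).
Proof.
move=> _ _ _ _ u_diff r2; apply: orthogonal_of_isometry.
by apply: isometry_of_unit_sphere => h h1; exact: enorm_jacobian_eq1.
Qed.
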